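(* Let $d\ge2$, let $\mathbf A,\mathbf B\in\overline{\mathbb Q}[t]$ be nonzero coprime polynomials, $\mathbf c=\mathbf A/\mathbf B$, let $\lambda\in\overline{\mathbb Q}^*$ and let $|\cdot|_v$ be an absolute value on $\overline{\mathbb Q}$. Then the limit $\lim_{n\to\infty}\frac{\log M_{n,v}(\lambda)}{d^n}$ exists, and for each $n_0\ge1$, $$\left|\lim_{n\to\infty}\frac{\log M_{n,v}(\lambda)}{d^n}-\frac{\log M_{n_0,v}(\lambda)}{d^{n_0}}\right|\le\frac{\log(2\max\{1,|\lambda|_v\})-\log(\min\{1,|\lambda|_v\})}{d^{n_0}(d-1)}.$$
   Context: The polynomials $\mathbf A_{\mathbf c,n},\mathbf B_{\mathbf c,n}$ are defined by: $\mathbf A_{\mathbf c,0}=\mathbf A$, $\mathbf B_{\mathbf c,0}=\mathbf B$; if $\mathbf A(0)\neq0$ then $\mathbf A_{\mathbf c,1}=\mathbf A^d+t\mathbf B^d$, $\mathbf B_{\mathbf c,1}=\mathbf A\mathbf B^{d-1}$, while if $\mathbf A(0)=0$ then $\mathbf A_{\mathbf c,1}=(\mathbf A^d+t\mathbf B^d)/t$, $\mathbf B_{\mathbf c,1}=\mathbf A\mathbf B^{d-1}/t$; for $n\ge1$, $\mathbf A_{\mathbf c,n+1}=\mathbf A_{\mathbf c,n}^d+t\mathbf B_{\mathbf c,n}^d$, $\mathbf B_{\mathbf c,n+1}=\mathbf A_{\mathbf c,n}\mathbf B_{\mathbf c,n}^{d-1}$. Then $M_{n,v}(\lambda)=\max\{|\mathbf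 A_{\mathbf c,n}(\lambda)|_v,|\mathbf B_{\mathbf c,n}(\lambda)|_v\}$. *)

From HB Require Import structures.
From mathcomp Require Import all_boot all_order all_algebra all_field.
From mathcomp Require Import all_classical all_reals all_analysis.
Set Implicit Arguments. Unset Strict Implicit. Unset Printing Implicit Defensive.
Import Order.TTheory GRing.Theory Num.Theory.
Local Open Scope ring_scope.

(* Qbar is modelled by algC (algebraic closure of Q). *)

Definition is_absval (R : realType) (v : algC -> R) : Prop :=
  [/\ forall x : algC, 0 <= v x,
      forall x : algC, v x = 0 <-> x = 0,
      forall x y : algC, v (x * y) = v x * v y &
      forall x y : algC, v (x + y) <= v x + v y].

Definition ABstep (d : nat) (p : {poly algC} * {poly algC}) :
    {poly algC} * {poly algC} :=
  (p.1 ^+ d + 'X * p.2 ^+ d, p.1 * p.2 ^+ (d.-1)).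

Definition ABfirst (d : nat) (A B : {poly algC}) : {poly algC} * {poly algC} :=
  if A.[0] != 0 then ABstep d (A, B)
  else (((ABstep d (A, B)).1 %/ 'X), ((ABstep d (A, B)).2 %/ 'X)).

Fixpoint ABseq (d : nat) (A B : {poly algC}) (n : nat) :
    {poly algC} * {poly algC} :=
  match n with
  | 0 => (A, B)
  | m.+1 => if m is 0 then ABfirst d A B else ABstep d (ABseq d A B m)
  end.

Definition Mnv (R : realType) (v : algC -> R) (d : nat) (A B : {poly algC})
    (n : nat) (lambda : algC) : R :=
  Num.max (v (ABseq d A B n).1.[lambda]) (v (ABseq d A B n).2.[lambda]).

From HB Require Import structures.
From mathcomp Require Import all_boot all_order all_algebra all_field.
From mathcomp Require Import all_classical all_reals all_analysis.
From mathcomp Require Import ring lra.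
Import Order.TTheory GRing.Theory Num.Theory numFieldNormedType.Exports.
Local Open Scope classical_set_scope.
Local Open Scope ring_scope.

(* Write M_n for M_{n,v}(lambda) and l = |lambda|_v.  For n >= 1 the values
   A_{c,n}(lambda), B_{c,n}(lambda) do not both vanish (coprimality and
   lambda <> 0), and the triangle inequality applied to one step of the
   recursion, with a case split on which of |A|, |B| is larger, gives
     min(1,l) / (2 max(1,l)) * M_n^d <= M_{n+1} <= 2 max(1,l) * M_n^d.
   Hence log M_n / d^n moves by at most K / d^(n+1), with
   K = log(2 max(1,l)) - log(min(1,l)); it is therefore Cauchy, and its
   distance to the limit is bounded by the geometric tail
   sum_(k > n) K / d^k = K / (d^n (d - 1)). *)

Section MaxStep.
Variables (R : realFieldType) (a b l P : R) (n : nat).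
Hypotheses (a_ge0 : 0 <= a) (b_ge0 : 0 <= b).

Lemma max_step_le : 0 <= l -> P <= a ^+ n.+1 + l * b ^+ n.+1 ->
  Num.max P (a * b ^+ n) <= 2 * Num.max 1 l * Num.max a b ^+ n.+1.
Proof.
move=> l_ge0 P_le; set M := Num.max a b.
have aM : a <= M by rewrite le_max lexx.
have bM : b <= M by rewrite le_max lexx orbT.
have leXM k z : 0 <= z -> z <= M -> z ^+ k <= M ^+ k.
  by move=> z_ge0 zM; apply: lerXn2r; rewrite ?nnegrE // (le_trans z_ge0).
have aXM : a ^+ n.+1 <= M ^+ n.+1 by apply: leXM.
have bXM : b ^+ n.+1 <= M ^+ n.+1 by apply: leXM.
have abM : a * b ^+ n <= M ^+ n.+1 by rewrite exprS ler_pM ?exprn_ge0 ?leXM.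
have MX_ge0 : 0 <= M ^+ n.+1 by rewrite exprn_ge0 // (le_trans a_ge0).
have m1 : 1 <= Num.max 1 l by rewrite le_max lexx.
have ml : l <= Num.max 1 l by rewrite le_max lexx orbT.
rewrite ge_max; apply/andP; split; nra.
Qed.

Lemma max_step_ge (c : R) :
  0 <= c -> 2 * c <= 1 -> 2 * c <= l -> 2 * l * c <= 1 ->
  a ^+ n.+1 - l * b ^+ n.+1 <= P -> l * b ^+ n.+1 - a ^+ n.+1 <= P ->
  c * Num.max a b ^+ n.+1 <= Num.max P (a * b ^+ n).
Proof.
move=> c_ge0 c1 cl lc P_geA P_geB.
have l_ge0 : 0 <= l by nra.
(* Unless a b^n is already large, the smaller of a, b is negligible and the
   larger power dominates P. *)
have [ab|ba] := leP a b.
- have [cb_le|abc] := leP (c * b ^+ n.+1) (a * b ^+ n).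
    by rewrite le_max cb_le orbT.
  have aXab : a ^+ n.+1 <= a * b ^+ n.
    by rewrite exprS ler_wpM2l //; apply: lerXn2r; rewrite ?nnegrE.
  have BX0 : 0 <= b ^+ n.+1 by rewrite exprn_ge0.
  rewrite le_max; apply/orP; left; nra.
- have [ca_le|abc] := leP (c * a ^+ n.+1) (a * b ^+ n).
    by rewrite le_max ca_le orbT.
  have bXab : b ^+ n.+1 <= a * b ^+ n by rewrite exprS ler_wpM2r ?exprn_ge0 // ltW.
  have AX0 : 0 <= a ^+ n.+1 by rewrite exprn_ge0.
  rewrite le_max; apply/orP; left; nra.
Qed.
End MaxStep.

Lemma ln_dist_le (R : realType) (k K x y : R) :
  0 < k <= 1 -> 1 <= K -> 0 < y -> k / K * y <= x -> x <= K * y ->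
  `|ln x - ln y| <= ln K - ln k.
Proof.
move=> /andP[k_gt0 k_le1] K_ge1 y_gt0 lo up.
have K_gt0 : 0 < K by apply: lt_le_trans K_ge1.
have x_gt0 : 0 < x by apply: lt_le_trans lo; rewrite !mulr_gt0 ?invr_gt0.
have lnk_le0 : ln k <= 0 by rewrite ln_le0.
have lnK_ge0 : 0 <= ln K by rewrite ln_ge0.
have hup : ln x <= ln (K * y) by rewrite ler_ln ?posrE ?mulr_gt0.
have hlo : ln (k / K * y) <= ln x by rewrite ler_ln ?posrE ?mulr_gt0 ?invr_gt0.
rewrite lnM ?posrE // in hup.
rewrite lnM ?ln_div ?posrE ?divr_gt0 // in hlo.
apply/ler_normlP; split; lra.
Qed.

Lemma cvg_telescope_bound (R : realType) (u e : R ^nat) :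
  e @ \oo --> 0 -> (forall n, `|u n.+1 - u n| <= e n - e n.+1) ->
  exists L, u @ \oo --> L /\ forall n, `|L - u n| <= e n.
Proof.
move=> e_cvg0 du.
have z_nd : nondecreasing_seq (u - e).
  by apply/nondecreasing_seqP => n; have /ler_normlP[] := du n; rewrite !fctE; lra.
have w_ni : nonincreasing_seq (u + e).
  by apply/nonincreasing_seqP => n; have /ler_normlP[] := du n; rewrite !fctE; lra.
have wz_cvg0 : (u + e) - (u - e) @ \oo --> 0.
  have -> : (u + e) - (u - e) = e + e by rewrite opprB addrC addrA subrK.
  by rewrite -[0]addr0; apply: cvgD.
have [wz cz cw] := adjacent_seq z_nd w_ni wz_cvg0.
exists (limn (u - e)); split.
  rewrite -[X in X @ \oo --> _](subrK e u) -[X in _ --> X]addr0; exact: cvgD.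
move=> n; have := nondecreasing_cvgn_le z_nd cz n.
have := nonincreasing_cvgn_ge w_ni cw n; rewrite wz !fctE.
by move=> hw hz; apply/ler_normlP; split; lra.
Qed.

Lemma geometric_tail_cvg0 (R : realType) (K D : R) : 1 < D ->
  (fun n => K / (D ^+ n * (D - 1))) @ \oo --> 0.
Proof.
move=> D_gt1; have D_gt0 : 0 < D by apply: lt_trans D_gt1.
have -> : (fun n => K / (D ^+ n * (D - 1))) = geometric (K / (D - 1)) D^-1.
  apply/funext => n; rewrite /geometric /= exprVn invfM mulrAC mulrA.
  by rewrite -mulrA [_^-1 * _]mulrC mulrA.
apply: cvg_geometric; rewrite ger0_norm ?invr_ge0 ?ltW //.
by rewrite invf_lt1.
Qed.

Lemma geometric_tail_diff (R : realFieldType) (K D : R) n : 1 < D ->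
  K / (D ^+ n * (D - 1)) - K / (D ^+ n.+1 * (D - 1)) = K / D ^+ n.+1.
Proof.
move=> D_gt1; have D_gt0 : 0 < D by apply: lt_trans D_gt1.
rewrite exprS; field.
by rewrite expf_neq0 ?subr_eq0 ?gt_eqF.
Qed.

Section AbsoluteValue.
Variables (R : realType) (v : algC -> R).
Hypothesis v_absval : is_absval v.

Lemma absval1 : v 1 = 1.
Proof.
have [_ v_eq0 vM _] := v_absval.
have v1_neq0 : v 1 != 0 by apply/eqP => /v_eq0/eqP; rewrite oner_eq0.
by apply: (mulfI v1_neq0); rewrite -vM !mulr1.
Qed.

Lemma absvalX x n : v (x ^+ n) = v x ^+ n.
Proof.
have [_ _ vM _] := v_absval.
by elim: n => [|n IHn]; rewrite ?absval1 // !exprS vM IHn.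
Qed.

Lemma absvalN x : v (- x) = v x.
Proof.
have [v_ge0 _ vM _] := v_absval.
have vN1 : v (-1) = 1.
  have : v (-1) ^+ 2 = 1 by rewrite -absvalX sqrrN expr1n absval1.
  by have := v_ge0 (-1); nra.
by rewrite -mulN1r vM vN1 mul1r.
Qed.

Lemma lerB_absvalD x y : v x - v y <= v (x + y).
Proof.
have [_ _ _ vD] := v_absval.
by have := vD (x + y) (- y); rewrite addrK absvalN; lra.
Qed.

Lemma absval_gt0 x : x != 0 -> 0 < v x.
Proof.
have [v_ge0 v_eq0 _ _] := v_absval.
by move=> x_neq0; rewrite lt_def v_ge0 andbT; apply: contra x_neq0 => /eqP/v_eq0->.
Qed.

Lemma ln_absval_step (d : nat) (lam x y : algC) :
  (0 < d)%N -> lam != 0 -> (x != 0) || (y != 0) ->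
  `|ln (Num.max (v (x ^+ d + lam * y ^+ d)) (v (x * y ^+ d.-1)))
     - d%:R * ln (Num.max (v x) (v y))|
   <= ln (2 * Num.max 1 (v lam)) - ln (Num.min 1 (v lam)).
Proof.
case: d => // n _ lam_neq0 xy_neq0 /=.
have [v_ge0 _ vM vD] := v_absval.
set l := v lam; set M := Num.max (v x) (v y).
have l_gt0 : 0 < l by apply: absval_gt0.
have M_gt0 : 0 < M.
  by case/orP: xy_neq0 => /absval_gt0 vpos; rewrite lt_max vpos ?orbT.
have P_le := vD (x ^+ n.+1) (lam * y ^+ n.+1).
have P_geA := lerB_absvalD (x ^+ n.+1) (lam * y ^+ n.+1).
have P_geB := lerB_absvalD (lam * y ^+ n.+1) (x ^+ n.+1).
rewrite [lam * _ + _]addrC vM !absvalX -/l in P_geB.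
rewrite vM !absvalX -/l in P_le P_geA.
rewrite vM absvalX mulr_natl -lnXn //.
set m := Num.min 1 l; set K := Num.max 1 l.
have m_gt0 : 0 < m by rewrite lt_min ltr01.
have m_le1 : m <= 1 by rewrite ge_min lexx.
have m_le_l : m <= l by rewrite ge_min lexx orbT.
have K_ge1 : 1 <= K by rewrite le_max lexx.
have K_ge_l : l <= K by rewrite le_max lexx orbT.
apply: ln_dist_le; rewrite ?m_gt0 ?m_le1 ?exprn_gt0 //.
- lra.
- set c := m / (2 * K).
  have c_ge0 : 0 <= c by rewrite divr_ge0 ?ltW //; lra.
  have cK : c * (2 * K) = m.
    by rewrite mulfVK // mulf_neq0 // gt_eqF //; lra.
  by apply: (@max_step_ge _ _ _ l _ _ (v_ge0 x) (v_ge0 y)); nra.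
- by apply: max_step_le; rewrite ?v_ge0 // ltW.
Qed.

End AbsoluteValue.

Lemma coprimep_horner_neq0 (F : idomainType) (p q : {poly F}) x :
  coprimep p q -> (p.[x] != 0) || (q.[x] != 0).
Proof.
move=> pq; case: (eqVneq p.[x] 0) => //= px0.
by apply: coprimep_root pq _; apply/eqP.
Qed.

Lemma ABstep_horner_neq0 (F : idomainType) (d : nat) (lam x y : F) :
  (0 < d)%N -> lam != 0 -> (x != 0) || (y != 0) ->
  (x ^+ d + lam * y ^+ d != 0) || (x * y ^+ d.-1 != 0).
Proof.
move=> d_gt0 lam_neq0 xy_neq0; have [x0|x_neq0] := eqVneq x 0.
  rewrite x0 eqxx /= in xy_neq0 *.
  by rewrite expr0n gtn_eqF // add0r (mulf_neq0 lam_neq0 (expf_neq0 _ xy_neq0)).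
have [->|y_neq0] := eqVneq y 0.
  by rewrite expr0n gtn_eqF // mulr0 addr0 expf_neq0.
by rewrite mulf_neq0 ?expf_neq0 ?orbT.
Qed.

Lemma horner_divpX (F : fieldType) (p : {poly F}) x :
  p.[0] = 0 -> x != 0 -> (p %/ 'X).[x] = p.[x] / x.
Proof.
move=> p0 x_neq0; have X_dvd : ('X - 0%:P) %| p by rewrite dvdp_XsubCl /root p0.
rewrite polyC0 subr0 in X_dvd.
by rewrite -{2}(divpK X_dvd) hornerM hornerX mulfK.
Qed.

Lemma ABseq_horner_neq0 (d : nat) (A B : {poly algC}) (lam : algC) n :
  (0 < d)%N -> coprimep A B -> lam != 0 -> (0 < n)%N ->
  ((ABseq d A B n).1.[lam] != 0) || ((ABseq d A B n).2.[lam] != 0).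
Proof.
move=> d_gt0 AB_coprime lam_neq0; case: n => // n _; elim: n => [|n IHn] /=.
  have : (A.[lam] ^+ d + lam * B.[lam] ^+ d != 0) || (A.[lam] * B.[lam] ^+ d.-1 != 0).
    by apply: ABstep_horner_neq0 => //; apply: coprimep_horner_neq0.
  rewrite /ABfirst; case: ifPn => [_|/negPn/eqP A0] /=; rewrite ?hornerE //.
  rewrite !horner_divpX ?hornerE ?A0 ?expr0n ?gtn_eqF ?mul0r ?add0r //.
  by rewrite !mulf_eq0 invr_eq0 (negPf lam_neq0) !orbF.
by rewrite !hornerE; apply: ABstep_horner_neq0.
Qed.

Lemma ln_Mnv_step (R : realType) (v : algC -> R) d A B (lam : algC) n :
  is_absval v -> (0 < d)%N -> coprimep A B -> lam != 0 -> (0 < n)%N ->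
  `|ln (Mnv v d A B n.+1 lam) - d%:R * ln (Mnv v d A B n lam)|
   <= ln (2 * Num.max 1 (v lam)) - ln (Num.min 1 (v lam)).
Proof.
move=> v_absval d_gt0 AB_coprime lam_neq0 n_gt0.
have := @ABseq_horner_neq0 d A B lam n d_gt0 AB_coprime lam_neq0 n_gt0.
case: n n_gt0 => // n _.
rewrite /Mnv -[ABseq d A B n.+2]/(ABstep d (ABseq d A B n.+1)).
set p := ABseq d A B n.+1 => p_neq0.
by rewrite /ABstep /= !hornerE; apply: ln_absval_step.
Qed.

Theorem corollary5p3 (R : realType) (d : nat) (A B : {poly algC})
    (lambda : algC) (v : algC -> R) :
  (2 <= d)%N -> A != 0 -> B != 0 -> coprimep A B -> lambda != 0 ->
  is_absval v ->
  exists L : R,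
    (fun n : nat => ln (Mnv v d A B n lambda) / (d ^ n)%:R) @ \oo --> L /\
    forall n0 : nat, (1 <= n0)%N ->
      `| L - ln (Mnv v d A B n0 lambda) / (d ^ n0)%:R |
        <= (ln (2 * Num.max 1 (v lambda)) - ln (Num.min 1 (v lambda)))
           / ((d ^ n0)%:R * (d%:R - 1)).
Proof.
move=> d_ge2 _ _ AB_coprime lam_neq0 v_absval.
have d_gt0 : (0 < d)%N by apply: leq_trans d_ge2.
have D_gt1 : 1 < (d%:R : R) by rewrite ltr1n.
set K := _ - _.
pose u n := ln (Mnv v d A B n lambda) / (d ^ n)%:R.
pose e n := K / ((d%:R : R) ^+ n.+1 * (d%:R - 1)).
have e_cvg0 : e @ \oo --> 0.
  by have := @geometric_tail_cvg0 _ K _ D_gt1; rewrite -cvg_shiftS.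
have du n : `|u n.+2 - u n.+1| <= e n - e n.+1.
  have D_gt0 : 0 < (d%:R : R) by apply: lt_trans D_gt1.
  rewrite /u /e geometric_tail_diff // !natrX.
  have -> : forall a b : R,
      a / d%:R ^+ n.+2 - b / d%:R ^+ n.+1 = (a - d%:R * b) / d%:R ^+ n.+2.
    by move=> a b; rewrite exprS; field; rewrite expf_neq0 ?gt_eqF.
  rewrite normrM [`|_^-1|]gtr0_norm ?ler_pM2r ?invr_gt0 ?exprn_gt0 //.
  exact: ln_Mnv_step.
(* The sequence is shifted because the first step (ABfirst) may divide by t. *)
have [L [u_cvg u_bound]] := @cvg_telescope_bound _ (fun n => u n.+1) e e_cvg0 du.
exists L; split; first by rewrite -cvg_shiftS.
case=> [|n] // _.
by have := u_bound n; rewrite /u /e natrX.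
Qed.
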